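(* Let $\mathfrak g$ be of type $A_n$ with $n\ge2$ and $r=\frac{n+1}{\gcd(n+1,2)}$. For every $k$ with $1\le k\le n$ and $k\ne1,r$, one has $d_k\lambda_1+\lambda_k\in\Psi_{\min}$, where $d_k=2r-k$ if $r<k<n+1$ and $d_k=r-k$ otherwise.
   Context: Type $A_n$ has Dynkin diagram $1-2-\cdots-n$, with fundamental weights $\lambda_1,\dots,\lambda_n$, root lattice $Q$ and dominant integral weights $\Lambda^+=\bigoplus_i\mathbb N\lambda_i$. $\Psi=\{\lambda\in\Lambda^+:2\lambda\in Q\}$ and $\Psi_{\min}=\{\lambda\in\Psi\setminus\{0\}:\lambda\ne\mu_1+\mu_2\text{ for all }\mu_1,\mu_2\in\Psi\setminus\{0\}\}$. *)

From mathcomp Require Import all_boot all_order all_algebra.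
From mathcomp Require Import ssrint.
Set Implicit Arguments. Unset Strict Implicit. Unset Printing Implicit Defensive.
Import GRing.Theory Num.Theory.

(* Type A_n, nodes 1..n represented by ordinals 0..n-1 of 'I_n.
   Weights are written in the basis of fundamental weights lambda_1..lambda_n.
   A dominant integral weight = nonnegative integer coordinates. *)
Definition domweight (n : nat) := {ffun 'I_n -> nat}.

Definition fundw (n k : nat) : domweight n := [ffun i : 'I_n => (i.+1 == k : nat)].

Definition zerow (n : nat) : domweight n := [ffun _ => 0%N].
Definition addw (n : nat) (a b : domweight n) : domweight n := [ffun i => (a i + b i)%N].
Definition scalew (n : nat) (c : nat) (a : domweight n) : domweight n := [ffun i => (c * a i)%N].

(* Cartan matrix of A_n: the simple root alpha_j = sum_i cartanA i j * lambda_i *)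
Definition cartanA (n : nat) (i j : 'I_n) : int :=
  if i == j then Posz 2
  else if (i.+1 == j :> nat) || (j.+1 == i :> nat) then (-1)%R else Posz 0.

Definition in_rootlattice (n : nat) (v : 'I_n -> int) : Prop :=
  exists c : 'I_n -> int, forall i : 'I_n, v i = (\sum_(j < n) c j * cartanA i j)%R.

Definition inPsi (n : nat) (l : domweight n) : Prop :=
  in_rootlattice (fun i => Posz (2 * l i)%N).

Definition inPsi_min (n : nat) (l : domweight n) : Prop :=
  inPsi l /\ l <> zerow n /\
  forall m1 m2 : domweight n, inPsi m1 -> inPsi m2 -> m1 <> zerow n -> m2 <> zerow n ->
    l <> addw m1 m2.

(* The root lattice of A_n is the kernel of the level map
   [sum_i a_i lambda_i |-> sum_i i a_i mod (n+1)] from the weight lattice onto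
   Z/(n+1).  Hence [2 lambda] lies in Q iff [n+1] divides twice the level of
   [lambda], i.e. iff [r] divides the level.  The weight [d lambda_1 + lambda_k]
   has level [d + k], which is [r] or [2r].  In a decomposition into two nonzero
   dominant weights, the summand not containing [lambda_k] is [a lambda_1] with
   [0 < a <= d < r], whose level [a] is not divisible by [r]. *)

From mathcomp Require Import all_boot all_order all_algebra.
From mathcomp Require Import zify ring.
Import GRing.Theory Num.Theory.

Set Implicit Arguments.
Unset Strict Implicit.
Unset Printing Implicit Defensive.

Section RootLattice.

Variable n : nat.
Local Open Scope ring_scope.

(* [level v] modulo [n.+1] is the class of the weight [v] in [P/Q = Z/(n+1)]. *)
Definition level (v : 'I_n -> int) : int := \sum_(i < n) i.+1%:Z * v i.

Lemma sum_mul_eq_nat (f : nat -> int) (m : nat) :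
  \sum_(j < n) f j * (j == m :> nat)%:R = (m < n)%:R * f m.
Proof.
elim: n => [|p IH]; first by rewrite big_ord0 mul0r.
rewrite big_ord_recr /= IH.
have [->|neq_pm] := eqVneq p m; first by rewrite ltnn ltnSn mulr1 mul0r add0r mul1r.
by rewrite mulr0 addr0 (_ : (m < p.+1)%N = (m < p)%N) //; lia.
Qed.

Lemma cartanA_indicator (i j : 'I_n) : cartanA i j =
  2 * (j == i :> nat)%:R - (j == i.+1 :> nat)%:R - (j.+1 == i :> nat)%:R.
Proof.
rewrite /cartanA -val_eqE /=; move: (nat_of_ord i) (nat_of_ord j) => a b.
have [->|_] := eqVneq a b.
  by rewrite (_ : (b == b.+1) = false) 1?(_ : (b.+1 == b) = false) //; lia.
rewrite mulr0 add0r eq_sym.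
have [->|_] := eqVneq b a.+1.
  by rewrite (_ : (a.+2 == a) = false) //; lia.
by case: (b.+1 == a).
Qed.

(* Node [x] of the Dynkin diagram carries the value [g x]; [g 0] is the
   absent node to the left of node 1, [g n.+1] the one to the right of node n. *)
Lemma sum_cartanA_row (g : nat -> int) (i : 'I_n) : g 0%N = 0 ->
  \sum_(j < n) g j.+1 * cartanA i j =
  2 * g i.+1 - g i.+2 - g i + (i.+1 == n)%:R * g n.+1.
Proof.
move=> g0.
under eq_bigr => j _ do rewrite cartanA_indicator mulrBr mulrBr mulrCA.
rewrite !sumrB -mulr_sumr !(sum_mul_eq_nat (fun j => g j.+1)) ltn_ord mul1r.
have -> : \sum_(j < n) g j.+1 * (j.+1 == i :> nat)%:R = g i.
  case: i => [[|p] lt_in] /=.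
    by rewrite g0 big1 // => j _; rewrite mulr0.
  under eq_bigr => j _ do rewrite eqSS.
  by rewrite (sum_mul_eq_nat (fun j => g j.+1)) (ltn_trans (ltnSn p) lt_in) mul1r.
have [eq_in|ne_in] := eqVneq i.+1 n.
  have -> : (i.+1 < n)%N = false by rewrite eq_in ltnn.
  have -> : g n.+1 = g i.+2 by rewrite eq_in.
  by rewrite mul0r mul1r subr0; ring.
by rewrite mul0r addr0 (_ : (i.+1 < n)%N) ?mul1r //; have := ltn_ord i; lia.
Qed.

Lemma cartanA_sym (i j : 'I_n) : cartanA i j = cartanA j i.
Proof. by rewrite /cartanA eq_sym orbC. Qed.

Lemma in_rootlattice_level (v : 'I_n -> int) :
  in_rootlattice v -> (n.+1 %| level v)%Z.
Proof.
case=> c def_v; apply/dvdzP; exists (\sum_(j < n) c j * (j.+1 == n)%:R).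
rewrite mulr_suml /level.
under eq_bigr => i _ do rewrite def_v mulr_sumr.
rewrite exchange_big /=; apply: eq_bigr => j _.
under eq_bigr => i _ do rewrite mulrCA cartanA_sym.
rewrite -mulr_sumr -mulrA; congr (_ * _).
rewrite (sum_cartanA_row (g := fun x : nat => x%:Z)) //.
case: (j.+1 == n); rewrite /= ?mul1r ?mul0r; lia.
Qed.

Lemma in_rootlattice_second_difference (g : nat -> int) :
  g 0%N = 0 -> g n.+1 = 0 ->
  in_rootlattice (fun i : 'I_n => 2 * g i.+1 - g i.+2 - g i).
Proof.
move=> g0 gn; exists (fun j => g j.+1) => i.
by rewrite sum_cartanA_row // gn mulr0 addr0.
Qed.

Lemma ramp_second_difference (x p : nat) :
  2 * (x.+1 - p)%N%:Z - (x.+2 - p)%N%:Z - (x - p)%N%:Z = - (x.+1 == p)%:R.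
Proof. by case: eqVneq => [<-|ne_xp] /=; lia. Qed.

(* [g] is piecewise linear with slope drop [v i] at node [i.+1], so its negated
   second difference is [v]; the initial slope [a] making [g n.+1 = 0] is an
   integer because [n.+1] divides the level. *)
Lemma in_rootlatticeP (v : 'I_n -> int) :
  in_rootlattice v <-> (n.+1 %| level v)%Z.
Proof.
split; first exact: in_rootlattice_level.
case/dvdzP=> q lev.
pose a := \sum_(j < n) v j - q.
pose g x := a * x%:Z - \sum_(j < n) v j * (x - j.+1)%N%:Z.
have g0 : g 0%N = 0 by rewrite /g mulr0 big1 ?subr0 // => j _; rewrite mulr0.
have gn : g n.+1 = 0.
  rewrite /g /a mulrBl -lev /level mulr_suml -!sumrB big1 // => j _.
  by rewrite subSS -subzn ?intS; [ring | have := ltn_ord j; lia].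
have [c def_g] := in_rootlattice_second_difference g0 gn.
exists c => i; rewrite -def_g /g.
set S := fun x => \sum_(j < n) v j * (x - j.+1)%N%:Z.
have S_second_difference : 2 * S i.+1 - S i.+2 - S i = - v i.
  rewrite /S mulr_sumr -!sumrB (bigD1 i) //= big1 => [|j ne_ji].
    by rewrite mulrCA -mulrBr -mulrBr ramp_second_difference eqxx addr0 mulrN1.
  rewrite mulrCA -mulrBr -mulrBr ramp_second_difference eqSS.
  by rewrite (_ : (i == j :> nat) = false) ?mulr0 ?oppr0 //; apply/negbTE; rewrite eq_sym.
by rewrite -[v i]opprK -S_second_difference !intS; ring.
Qed.

End RootLattice.

Lemma divn_gcd2_cases (m : nat) :
  odd m /\ m %/ gcdn m 2 = m \/ m = 2 * (m %/ gcdn m 2).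
Proof.
case: (boolP (odd m)) => [odd_m|even_m].
  by left; rewrite (eqP (_ : coprime m 2)) ?divn1 ?coprimen2.
right; rewrite -[m]odd_double_half (negPf even_m) add0n -mul2n.
by rewrite gcdnC gcdnMr mulKn.
Qed.

Lemma dvdn_mul2_gcd (m a : nat) : (m %| 2 * a) = (m %/ gcdn m 2 %| a).
Proof.
case: (divn_gcd2_cases m) => [[odd_m ->]|def_m]; first by rewrite Gauss_dvdr ?coprimen2.
by rewrite {1}def_m dvdn_pmul2l.
Qed.

Lemma leq_double_divn_gcd2 (m : nat) : m <= 2 * (m %/ gcdn m 2).
Proof. by case: (divn_gcd2_cases m) => [[_ ->]|<-]; [rewrite leq_pmull | ]. Qed.

Lemma complementary_index (r k : nat) : 0 < k -> k != r -> k < 2 * r ->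
  let d := if r < k then 2 * r - k else r - k in d < r /\ r %| d + k.
Proof.
move=> k_gt0 ne_kr lt_k2r d; rewrite /d; case: (ltnP r k) => [lt_rk|le_kr].
  by rewrite subnK ?dvdn_mull //; [split; lia | lia].
by rewrite subnK // dvdnn; split; lia.
Qed.

Section DominantWeights.

Variable n : nat.
Implicit Types (l m : domweight n) (a d k : nat).

Definition wlevel l : nat := \sum_(i < n) i.+1 * l i.

Lemma inPsiE l : inPsi l <-> n.+1 %| 2 * wlevel l.
Proof.
rewrite /inPsi in_rootlatticeP.
have -> : level (fun i => Posz (2 * l i)) = Posz (2 * wlevel l).
  rewrite /level /wlevel big_distrr -natz natr_sum; apply: eq_bigr => i _.
  by rewrite natz !PoszM mulrCA.
by rewrite dvdzE.
Qed.

Lemma wlevel_addw l m : wlevel (addw l m) = wlevel l + wlevel m.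
Proof. by rewrite /wlevel -big_split; apply: eq_bigr => i _; rewrite ffunE mulnDr. Qed.

Lemma wlevel_scalew a l : wlevel (scalew a l) = a * wlevel l.
Proof. by rewrite /wlevel big_distrr; apply: eq_bigr => i _; rewrite ffunE mulnCA. Qed.

Lemma wlevel_zerow : wlevel (zerow n) = 0.
Proof. by rewrite /wlevel big1 // => i _; rewrite ffunE muln0. Qed.

Lemma wlevel_fundw k : 0 < k <= n -> wlevel (fundw n k) = k.
Proof.
move=> /andP[k_gt0 le_kn]; have lt_k1n : k.-1 < n by lia.
rewrite /wlevel (bigD1 (Ordinal lt_k1n)) //= big1 => [|i ne_ik]; rewrite ffunE /=.
  by rewrite prednK // eqxx muln1 addn0.
rewrite (_ : (i.+1 == k) = false) ?muln0 //; apply: contraNF ne_ik => /eqP def_k.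
by apply/eqP/val_inj; rewrite /= -def_k.
Qed.

Lemma inPsi_scalew_fundw1 a : 0 < n ->
  inPsi (scalew a (fundw n 1)) <-> n.+1 %/ gcdn n.+1 2 %| a.
Proof.
by move=> n_gt0; rewrite inPsiE wlevel_scalew wlevel_fundw ?n_gt0 // muln1 dvdn_mul2_gcd.
Qed.

Lemma supported_below_dlambda1_lambdak m d k : 0 < n -> 1 < k ->
  (forall i, m i <= addw (scalew d (fundw n 1)) (fundw n k) i) ->
  (forall i : 'I_n, i.+1 = k -> m i = 0) ->
  exists2 a, a <= d & m = scalew a (fundw n 1).
Proof.
move=> n_gt0 k_gt1 le_m m_k0; pose i1 := Ordinal n_gt0.
have k_neq1 : (1 == k) = false by rewrite eq_sym; apply/negbTE; lia.
exists (m i1); first by have := le_m i1; rewrite !ffunE /= k_neq1 muln1 addn0.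
apply/ffunP => i; rewrite !ffunE.
have [->|ne_i1] := eqVneq i i1; first by rewrite /= muln1.
have i_neq0 : (i.+1 == 1) = false by rewrite eqSS; apply/negbTE: ne_i1.
have := le_m i; rewrite !ffunE i_neq0 !muln0 add0n.
by case: (eqVneq i.+1 k) => [/m_k0 -> //|_]; rewrite leqn0 => /eqP.
Qed.

Lemma summands_dlambda1_lambdak m1 m2 d k : 1 < k <= n ->
  addw m1 m2 = addw (scalew d (fundw n 1)) (fundw n k) ->
  exists2 a, a <= d & m1 = scalew a (fundw n 1) \/ m2 = scalew a (fundw n 1).
Proof.
move=> /andP[k_gt1 le_kn] def_l; have n_gt0 : 0 < n by lia.
have lt_k1n : k.-1 < n by lia.
pose ik := Ordinal lt_k1n.
have at_k (i : 'I_n) : i.+1 = k -> i = ik by move=> def_k; apply: val_inj; rewrite /= -def_k.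
have le_m1 i : m1 i <= addw (scalew d (fundw n 1)) (fundw n k) i.
  by rewrite -def_l ffunE leq_addr.
have le_m2 i : m2 i <= addw (scalew d (fundw n 1)) (fundw n k) i.
  by rewrite -def_l ffunE leq_addl.
have sum_k : m1 ik + m2 ik = 1.
  have := congr1 (fun l : domweight n => l ik) def_l; rewrite !ffunE /= prednK; last lia.
  by rewrite eqxx (_ : (k == 1) = false) ?muln0 //; apply/negbTE; lia.
have [m2_k0|m1_k0] : m2 ik = 0 \/ m1 ik = 0 by lia.
  have [a le_ad def_m2] := supported_below_dlambda1_lambdak n_gt0 k_gt1 le_m2
    (fun i def_k => etrans (congr1 m2 (at_k i def_k)) m2_k0).
  by exists a; last right.
have [a le_ad def_m1] := supported_below_dlambda1_lambdak n_gt0 k_gt1 le_m1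
  (fun i def_k => etrans (congr1 m1 (at_k i def_k)) m1_k0).
by exists a; last left.
Qed.

End DominantWeights.

Theorem lemma4p5 (n : nat) (hn : 2 <= n) (k : nat) (hk1 : 1 <= k) (hkn : k <= n) :
  let r := (n.+1 %/ gcdn n.+1 2)%N in
  k <> 1%N -> k <> r ->
  let d := if (r < k) && (k < n.+1) then (2 * r - k)%N else (r - k)%N in
  inPsi_min (addw (scalew d (fundw n 1)) (fundw n k)).
Proof.
move=> r ne_k1 /eqP ne_kr d; have n_gt0 : 0 < n by lia.
have lt_k2r : k < 2 * r by have := leq_double_divn_gcd2 n.+1; lia.
have [lt_dr dvd_r_dk] : d < r /\ r %| d + k.
  by rewrite /d ltnS hkn andbT; apply: complementary_index.
have level_l : wlevel (addw (scalew d (fundw n 1)) (fundw n k)) = d + k.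
  by rewrite wlevel_addw wlevel_scalew !wlevel_fundw ?hk1 ?hkn ?n_gt0 // muln1.
split; [|split].
- by apply/inPsiE; rewrite level_l dvdn_mul2_gcd.
- by move/(congr1 (@wlevel n)); rewrite level_l wlevel_zerow; lia.
move=> m1 m2 psi_m1 psi_m2 nz_m1 nz_m2 /esym /summands_dlambda1_lambdak.
have k_gt1 : 1 < k by lia.
case=> [|a le_ad def_m]; first by rewrite k_gt1.
have [psi_a nz_a] : inPsi (scalew a (fundw n 1)) /\ scalew a (fundw n 1) <> zerow n.
  by case: def_m => <-.
have a_gt0 : 0 < a.
  by rewrite lt0n; apply: contra_notN nz_a => /eqP ->; apply/ffunP => i; rewrite !ffunE.
have := dvdn_leq a_gt0 ((inPsi_scalew_fundw1 a n_gt0).1 psi_a); lia.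
Qed.
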